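(* Let $\phi_1,\dots,\phi_m:\{0,1\}^{\mathbb Z^d}\to\{0,1\}$ be non-constant local monotone maps and suppose there is a linear polar function $\mathcal L:\mathbb R^d\to\mathbb R^\sigma$ of dimension $\sigma\ge2$ with $\sum_{s=1}^\sigma\inf_{1\le k\le m}\varepsilon_{\phi_k}(\mathcal L_s)>0$. Then there exist a linear polar function $\mathcal L':\mathbb R^d\to\mathbb R^{\sigma'}$ of dimension $\sigma'\ge2$ and a vector $v\in\mathbb R^d$ such that $\varepsilon^v_{\phi_k}(\mathcal L'_s)>0$ for all $1\le s\le\sigma'$ and $1\le k\le m$.
   Context: A map $\phi:\{0,1\}^{\mathbb Z^d}\to\{0,1\}$ is local if it depends on finitely many coordinates and monotone if $x\le y$ implies $\phi(x)\le\phi(y)$. A minimal one-set of $\phi$ is a finite $A\subset\mathbb Z^d$ with $\phi(1_A)=1$ such that no proper subset has this property; $\mathcal A(\phi)$ is the set of minimal one-sets. A linear polar function of dimension $\sigma$ is a linear map $\mathcal L:\mathbb R^d\to\mathbb R^\sigma$ with $\sum_{s=1}^\sigma\mathcal L_s(z)=0$ for all $z$. For a linear form $\ell$ and $v\in\mathbb R^d$, the edge speed is $\varepsilon_\phi(\ell):=\sup_{A\in\mathcal A(\phi)}\inf_{i\in A}\ell(i)$ and the compensated edge speed is $\varepsilon^v_\phi(\ell):=\sup_{A\in\mathcal A(\phi)}\inf_{i\in A}\ell(i-v)$. *)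

From HB Require Import structures.
From mathcomp Require Import all_boot all_order all_algebra.
From mathcomp Require Import boolp classical_sets functions cardinality reals ereal.
Set Implicit Arguments. Unset Strict Implicit. Unset Printing Implicit Defensive.
Import Order.TTheory GRing.Theory Num.Theory.
Local Open Scope classical_set_scope.
Local Open Scope ring_scope.

Definition point (d : nat) := 'rV[int]_d.
Definition config (d : nat) := point d -> bool.

Definition local d (phi : config d -> bool) : Prop :=
  exists S : set (point d), finite_set S /\
    forall x y : config d, (forall i, S i -> x i = y i) -> phi x = phi y.

Definition monotone d (phi : config d -> bool) : Prop :=
  forall x y : config d, (forall i, x i ==> y i) -> phi x ==> phi y.

Definition nonconstant d (phi : config d -> bool) : Prop :=
  exists x y : config d, phi x != phi y.

Definition indic d (A : set (point d)) : config d := fun i => `[< A i >].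

Definition minimal_one_set d (phi : config d -> bool) (A : set (point d)) : Prop :=
  finite_set A /\ phi (indic A) /\
  forall B : set (point d), B `<` A -> finite_set B -> phi (indic B) = false.

Definition embed (R : realType) d (i : point d) : 'rV[R]_d := map_mx (fun z : int => z%:~R) i.

Definition edge_speed (R : realType) d (phi : config d -> bool) (ell : 'rV[R]_d -> R) : \bar R :=
  ereal_sup [set ereal_inf [set (ell (embed R i))%:E | i in A]
            | A in [set A | minimal_one_set phi A]].

Definition comp_edge_speed (R : realType) d (phi : config d -> bool)
    (ell : 'rV[R]_d -> R) (v : 'rV[R]_d) : \bar R :=
  ereal_sup [set ereal_inf [set (ell (embed R i - v))%:E | i in A]
            | A in [set A | minimal_one_set phi A]].

(* A linear map L : R^d -> R^sigma, given by its matrix (z |-> z *m L);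
   its s-th component L_s is a linear form. *)
Definition comp_form (R : realType) d sigma (L : 'M[R]_(d, sigma)) (s : 'I_sigma)
  : 'rV[R]_d -> R := fun z => (z *m L) 0 s.

Definition linear_polar (R : realType) d sigma (L : 'M[R]_(d, sigma)) : Prop :=
  forall z : 'rV[R]_d, \sum_(s < sigma) comp_form L s z = 0.

From HB Require Import structures.
From mathcomp Require Import all_boot all_order all_algebra.
From mathcomp Require Import boolp classical_sets functions cardinality reals ereal.
From mathcomp Require Import ring lra.
Set Implicit Arguments. Unset Strict Implicit. Unset Printing Implicit Defensive.
Import Order.TTheory GRing.Theory Num.Theory.
Local Open Scope classical_set_scope.
Local Open Scope ring_scope.

(* Choose reals a_s strictly below the infima over k of the edge speeds of L_s,
   with sum_s a_s > 0; every phi_k then has, for each s, a nonempty minimal one-set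
   on which L_s > a_s.  Among the weights nu >= 0 with sum_s nu_s L_s = 0 and
   sum_s nu_s a_s > 0 (nu = 1 is one, L being polar) take one of minimal support S.
   The forms nu_s L_s, s in S, make up a polar function L'.  By minimality the only
   linear relations among them are the constant ones, so the vector
   (nu_s (a_s - delta))_s, with delta = sum nu_s a_s / sum nu_s, being orthogonal to
   the constants, is L'(v) for some v; hence L'_s(i - v) >= nu_s delta > 0 on the
   one-sets.  S has at least two elements: a lone column in a relation would
   vanish, forcing a_s < L_s(i) = 0 and hence sum_s nu_s a_s <= 0. *)

Lemma esum_gt0_real_minorant (R : realType) n (E : 'I_n -> \bar R) :
  (0 < \sum_(s < n) E s)%E ->
  exists b : 'I_n -> R, (forall s, (b s)%:E <= E s)%E /\ 0 < \sum_(s < n) b s.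
Proof.
move=> Epos.
have E_neqNy s : E s != -oo%E.
  by apply/eqP => Es; move: Epos; rewrite (bigD1 s) //= Es addNye.
pose T : R := 1 + \sum_(s < n) `|fine (E s)|.
pose b s : R := if E s == +oo%E then T else fine (E s).
exists b; split.
  by move=> s; rewrite /b; case: (E s) (E_neqNy s) => [r| |] //= _; rewrite ?leey ?lexx.
have [[s0 Es0]|Efin] := pselect (exists s, E s = +oo%E); last first.
  have bE s : (b s)%:E = E s.
    rewrite /b; case: eqP => [Es|/eqP]; first by case: Efin; exists s.
    by case: (E s) (E_neqNy s) => [r| |].
  by rewrite -lte_fin -sumEFin; under eq_bigr do rewrite bE.
have T_ge0 : 0 <= T by apply: addr_ge0 => //; apply: sumr_ge0.
have b_ge s : - `|fine (E s)| <= b s.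
  rewrite /b; case: ifP => _; last exact: lerNnormlW.
  by apply: le_trans T_ge0; rewrite oppr_le0.
(* the value [T] chosen for a [+oo] term outweighs all the other terms *)
rewrite (bigD1 s0) //= /b Es0 eqxx -/b.
have : - \sum_(s < n | s != s0) `|fine (E s)| <= \sum_(s < n | s != s0) b s.
  by rewrite -sumrN; apply: ler_sum => s _; apply: b_ge.
have : \sum_(s < n | s != s0) `|fine (E s)| <= \sum_(s < n) `|fine (E s)|.
  by rewrite [X in _ <= X](bigD1 s0) //= lerDr.
rewrite /T; lra.
Qed.

Lemma sum_gt0_strict_minorant (R : realFieldType) n (b : 'I_n -> R) :
  0 < \sum_(s < n) b s -> exists a : 'I_n -> R, (forall s, a s < b s) /\ 0 < \sum_(s < n) a s.
Proof.
move=> bpos; have n_gt0 : (0 < n)%N.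
  by case: n b bpos => // b; rewrite big_ord0 ltxx.
pose eta := (\sum_(s < n) b s) / (2 * n%:R).
have n_gt0R : 0 < n%:R :> R by rewrite ltr0n.
have eta_gt0 : 0 < eta by rewrite divr_gt0 // mulr_gt0.
exists (fun s => b s - eta); split; first by move=> s; rewrite ltrBlDr ltrDl.
rewrite sumrB sumr_const card_ord -mulr_natr.
have -> : eta * n%:R = (\sum_(s < n) b s) / 2.
  by rewrite /eta; field; rewrite pnatr_eq0 -lt0n n_gt0.
lra.
Qed.

Lemma one_set_nonempty d (phi : config d -> bool) (A : set 'rV[int]_d) :
  monotone phi -> nonconstant phi -> phi (indic A) -> A !=set0.
Proof.
move=> mon [x [y phixy]] phiA; apply: contrapT => /set0P/negP/negPn/eqP A0.
have phiT z : phi z.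
  by have := mon (indic A) z; rewrite phiA; apply=> i; rewrite A0 /indic asboolF.
by move: phixy; rewrite !phiT.
Qed.

Lemma edge_speed_gt (R : realType) d (phi : config d -> bool) (ell : 'rV[R]_d -> R) r :
  (r%:E < edge_speed phi ell)%E ->
  exists A, minimal_one_set phi A /\ forall i, A i -> r < ell (embed R i).
Proof.
case/ereal_sup_gt => _ [A mA <-] rA; exists A; split => // i Ai.
by rewrite -lte_fin; apply: lt_le_trans rA _; apply: ereal_inf_lbound; exists i.
Qed.

Lemma comp_edge_speed_ge (R : realType) d (phi : config d -> bool)
    (ell : 'rV[R]_d -> R) v A r :
  minimal_one_set phi A -> (forall i, A i -> r <= ell (embed R i - v)) ->
  (r%:E <= comp_edge_speed phi ell v)%E.
Proof.
move=> mA rA; apply: le_trans (ereal_sup_ubound _); last by exists A.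
by apply: le_ereal_inf_tmp => _ [i Ai <-]; rewrite lee_fin rA.
Qed.

Section MinimalSupportRelation.
Variables (R : realFieldType) (d n : nat) (L : 'M[R]_(d, n)) (a : 'I_n -> R).

Definition col_relation (nu : 'I_n -> R) := forall i, \sum_s L i s * nu s = 0.

Definition pos_relation nu :=
  [/\ forall s, 0 <= nu s, col_relation nu & 0 < \sum_s nu s * a s].

Definition min_pos_relation nu := pos_relation nu /\
  forall nu', pos_relation nu' -> (#|support nu| <= #|support nu'|)%N.

Lemma col_relationB nu rho t : col_relation nu -> col_relation rho ->
  col_relation (fun s => nu s - t * rho s).
Proof.
move=> nuL rhoL i; under eq_bigr do rewrite mulrBr mulrCA.
by rewrite sumrB -mulr_sumr nuL rhoL mulr0 subr0.
Qed.

Lemma col_relationN rho : col_relation rho -> col_relation (fun s => - rho s).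
Proof. by move=> rhoL i; under eq_bigr do rewrite mulrN; rewrite sumrN rhoL oppr0. Qed.

Lemma pairingB nu rho t : \sum_s (nu s - t * rho s) * a s =
   \sum_s nu s * a s - t * \sum_s rho s * a s.
Proof. by under eq_bigr do rewrite mulrBl -mulrA; rewrite sumrB -mulr_sumr. Qed.

Lemma exists_min_pos_relation nu : pos_relation nu -> exists mu, min_pos_relation mu.
Proof.
move=> nuP.
have exP : exists k, `[< exists mu, pos_relation mu /\ #|support mu| = k >].
  by exists #|support nu|; apply/asboolP; exists nu.
case: (ex_minnP exP) => k /asboolP [mu [muP <-]] mu_min; exists mu; split => // nu' nu'P.
by apply: mu_min; apply/asboolP; exists nu'.
Qed.

Variable nu : 'I_n -> R.
Hypothesis nu_min : min_pos_relation nu.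

(* Otherwise moving from [nu] along [- rho] until a coordinate vanishes gives a
   positive relation of smaller support. *)
Lemma min_pos_relation_le0 rho : col_relation rho -> \sum_s rho s * a s = 0 ->
  (forall s, nu s = 0 -> rho s = 0) -> forall s, rho s <= 0.
Proof.
case: nu_min => -[nu_ge0 nuL nu_a] nu_le rhoL rho_a rho_supp s0.
rewrite leNgt; apply/negP => rho_s0.
have [s1 rho_s1 s1_min] :=
  @arg_minP _ _ _ s0 (fun s => 0 < rho s) (fun s => nu s / rho s) rho_s0.
pose t := nu s1 / rho s1.
have nu_s1 : nu s1 != 0 by apply: contraTneq rho_s1 => /rho_supp ->; rewrite ltxx.
pose nu' s := nu s - t * rho s.
have nu'P : pos_relation nu'.
  split; [|exact: col_relationB | by rewrite pairingB rho_a mulr0 subr0].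
  move=> s; rewrite subr_ge0; have [rho_s|rho_s] := ltP 0 (rho s).
    by rewrite -ler_pdivlMr // s1_min.
  by apply: le_trans (nu_ge0 s); rewrite mulr_ge0_le0 // divr_ge0 // ltW.
have := nu_le _ nu'P; rewrite leqNgt => /negP; apply; apply: proper_card.
apply/properP; split.
  apply/fintype.subsetP => s; rewrite !inE; apply: contra => /eqP nu_s.
  by rewrite /nu' nu_s rho_supp // mulr0 subrr.
by exists s1; rewrite !inE ?negbK // /nu' /t divfK ?subrr // gt_eqF.
Qed.

Lemma min_pos_relation_proportional rho : col_relation rho ->
  (forall s, nu s = 0 -> rho s = 0) -> exists c, forall s, rho s = c * nu s.
Proof.
move=> rhoL rho_supp; have [[_ nuL nu_a] _] := nu_min.
pose c := (\sum_s rho s * a s) / (\sum_s nu s * a s); exists c => s.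
pose r s := rho s - c * nu s.
have rL : col_relation r by exact: col_relationB.
have r_a : \sum_s r s * a s = 0 by rewrite pairingB divfK ?subrr // gt_eqF.
have r_supp s' : nu s' = 0 -> r s' = 0.
  by move=> nu_s; rewrite /r nu_s rho_supp ?mulr0 ?subrr.
apply/eqP; rewrite -subr_eq0 -/(r s) eq_le min_pos_relation_le0 //= -oppr_le0.
apply: (min_pos_relation_le0 (col_relationN rL)).
  by under eq_bigr do rewrite mulNr; rewrite sumrN r_a oppr0.
by move=> s' /r_supp ->; rewrite oppr0.
Qed.

End MinimalSupportRelation.

Lemma row_space_of_kernel_orthogonal (F : fieldType) m n
    (M : 'M[F]_(m, n)) (y : 'rV[F]_n) :
  (forall rho : 'cV[F]_n, M *m rho = 0 -> y *m rho = 0) -> exists v, y = v *m M.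
Proof.
move=> y_orth; apply/submxP; rewrite submxE; apply/eqP/matrixP => i k.
have Mrho : M *m (cokermx M *m delta_mx k (0 : 'I_1)) = 0.
  by rewrite mulmxA mulmx_coker mul0mx.
by have /matrixP/(_ i 0) := y_orth _ Mrho; rewrite mulmxA -colE !mxE.
Qed.

Section Compression.
Variables (R : realFieldType) (d n : nat) (L : 'M[R]_(d, n)) (nu : 'I_n -> R).

Definition compress : 'M[R]_(d, #|support nu|) :=
  \matrix_(i, j) (nu (enum_val j) * L i (enum_val j)).

Lemma sum_support (F : 'I_n -> R) : (forall s, nu s = 0 -> F s = 0) ->
  \sum_s F s = \sum_(j < #|support nu|) F (enum_val j).
Proof.
move=> F0; rewrite -big_enum_val [RHS]big_mkcond /=; apply: eq_bigr => s _.
by rewrite inE; case: eqP => // /F0 ->.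
Qed.

Lemma enum_support_gt0 : (forall s, 0 <= nu s) ->
  forall j : 'I_#|support nu|, 0 < nu (enum_val j).
Proof. by move=> nu_ge0 j; rewrite lt_def (enum_valP j : nu _ != 0) nu_ge0. Qed.

Lemma compress_col_relation1 : col_relation L nu -> col_relation compress (fun=> 1).
Proof.
move=> nuL i; apply: etrans (nuL i).
rewrite (sum_support (F := fun s => L i s * nu s)) => [|s ->]; last by rewrite mulr0.
by apply: eq_bigr => j _; rewrite mxE mulr1 mulrC.
Qed.

(* A relation [rho] among the columns of [compress] is a relation [nu * rho]
   among the columns of [L] supported by [nu]. *)
Lemma compress_col_relation_const a rho : min_pos_relation L a nu ->
  col_relation compress rho -> exists c, forall j, rho j = c.
Proof.
move=> nu_min rhoC.
pose ext s := nu s * \sum_(j | enum_val j == s) rho j.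
have ext_val j : ext (enum_val j) = nu (enum_val j) * rho j.
  by rewrite /ext (big_pred1 j) // => j'; rewrite (inj_eq enum_val_inj).
have extL : col_relation L ext.
  move=> i; apply: etrans (rhoC i).
  rewrite (sum_support (F := fun s => L i s * ext s)); last first.
    by move=> s nu_s; rewrite /ext nu_s mul0r mulr0.
  by apply: eq_bigr => j _; rewrite ext_val mxE mulrCA mulrA.
have ext_supp s : nu s = 0 -> ext s = 0 by move=> nu_s; rewrite /ext nu_s mul0r.
have [c ext_prop] := min_pos_relation_proportional nu_min extL ext_supp.
exists c => j; apply: (mulfI (enum_valP j : nu _ != 0)).
by rewrite -ext_val ext_prop mulrC.
Qed.

Lemma compress_support_gt1 a : min_pos_relation L a nu ->
  (forall s, (forall i, L i s = 0) -> a s <= 0) -> (1 < #|support nu|)%N.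
Proof.
move=> [[nu_ge0 nuL nu_a] _] a_zero; rewrite ltnNge; apply/negP => supp_le1.
have ord_eq (j j' : 'I_#|support nu|) : j = j'.
  apply/ord_inj; move: (leq_trans (ltn_ord j) supp_le1) (leq_trans (ltn_ord j') supp_le1).
  by rewrite !ltnS !leqn0 => /eqP -> /eqP ->.
have col_zero (j : 'I_#|support nu|) i : L i (enum_val j) = 0.
  have := nuL i; rewrite (sum_support (F := fun s => L i s * nu s)) => [|s ->];
    last by rewrite mulr0.
  rewrite (bigD1 j) //= big1 ?addr0 => [/eqP|j' /eqP []]; last by rewrite (ord_eq j' j).
  by rewrite mulf_eq0 (negbTE (enum_valP j : nu _ != 0)) orbF => /eqP.
move: nu_a; rewrite (sum_support (F := fun s => nu s * a s)) => [|s ->];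
  last by rewrite mul0r.
rewrite ltNge => /negP; apply; apply: sumr_le0 => j _.
by rewrite pmulr_rle0 ?(a_zero _ (col_zero j)) ?enum_support_gt0.
Qed.

Lemma compress_row_solution a : min_pos_relation L a nu ->
  exists v : 'rV_d, forall j, (v *m compress) 0 j < nu (enum_val j) * a (enum_val j).
Proof.
move=> nu_min; have [[nu_ge0 _ nu_a] _] := nu_min.
have nu_gt0 := enum_support_gt0 nu_ge0.
pose sn := \sum_(j < #|support nu|) nu (enum_val j).
pose SA := \sum_(j < #|support nu|) nu (enum_val j) * a (enum_val j).
have SA_gt0 : 0 < SA.
  by rewrite /SA -(sum_support (F := fun s => nu s * a s)) // => s ->; rewrite mul0r.
have sn_gt0 : 0 < sn.
  rewrite lt_def sumr_ge0 ?andbT => [|j _]; last exact: ltW.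
  apply/eqP => /psumr_eq0P nu0; move: SA_gt0; rewrite /SA big1 ?ltxx // => j _.
  by rewrite nu0 ?mul0r // => j' _; exact: ltW.
pose del := SA / sn.
(* [y] is orthogonal to the constants, the only relations of [compress] *)
pose y : 'rV_#|support nu| := \row_j (nu (enum_val j) * (a (enum_val j) - del)).
have [v yv] : exists v, y = v *m compress.
  apply: row_space_of_kernel_orthogonal => rho rhoC.
  have rho_rel : col_relation compress (fun j => rho j 0).
    by move=> i; have /matrixP/(_ i 0) := rhoC; rewrite !mxE.
  have [c rho_c] := compress_col_relation_const nu_min rho_rel.
  have y_sum : \sum_j y 0 j = 0.
    under eq_bigr do rewrite mxE mulrBr.
    by rewrite sumrB -mulr_suml mulrC divfK ?subrr ?gt_eqF.
  apply/matrixP => i k; rewrite !mxE (ord1 i) (ord1 k).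
  by under eq_bigr do rewrite rho_c; rewrite -mulr_suml y_sum mul0r.
by exists v => j; rewrite -yv mxE ltr_pM2l // ltrBlDr ltrDl divr_gt0.
Qed.

End Compression.

Lemma linear_polarP (R : realType) d n (L : 'M[R]_(d, n)) :
  linear_polar L <-> col_relation L (fun=> 1).
Proof.
split=> [L_pol i|L1 z].
  apply: etrans (L_pol (delta_mx 0 i)); apply: eq_bigr => s _.
  by rewrite /comp_form -rowE mxE mulr1.
rewrite /comp_form; under eq_bigr do rewrite mxE.
rewrite exchange_big /= big1 // => i _.
by rewrite -mulr_sumr (eq_bigr _ (fun s _ => esym (mulr1 (L i s)))) L1 mulr0.
Qed.

Lemma comp_form_compress (R : realType) d n (L : 'M[R]_(d, n)) nu j z :
  comp_form (compress L nu) j z = nu (enum_val j) * comp_form L (enum_val j) z.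
Proof.
rewrite /comp_form !mxE mulr_sumr; apply: eq_bigr => i _.
by rewrite mxE mulrCA.
Qed.

Lemma linear_polar_refinement (R : realType) d n (L : 'M[R]_(d, n)) (a : 'I_n -> R) :
  linear_polar L -> 0 < \sum_s a s -> (forall s, (forall i, L i s = 0) -> a s <= 0) ->
  exists n' (L' : 'M[R]_(d, n')) (v : 'rV[R]_d), (1 < n')%N /\ linear_polar L' /\
    forall j, exists s w, [/\ 0 < w, comp_form L' j =1 (fun z => w * comp_form L s z)
                           & comp_form L' j v < w * a s].
Proof.
move=> /linear_polarP L1 a_gt0 a_zero.
have [nu nu_min] : exists nu, min_pos_relation L a nu.
  apply: (@exists_min_pos_relation _ _ _ _ _ (fun=> 1)); split=> //.
  by under eq_bigr do rewrite mul1r.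
have [[nu_ge0 nuL _] _] := nu_min.
have [v vP] := compress_row_solution nu_min.
exists #|support nu|, (compress L nu), v; split.
  exact: compress_support_gt1 nu_min a_zero.
split; first by apply/linear_polarP; exact: compress_col_relation1.
move=> j; exists (enum_val j), (nu (enum_val j)); split; last exact: vP.
  exact: enum_support_gt0.
by move=> z; rewrite comp_form_compress.
Qed.

Lemma comp_formB (R : realType) d n (L : 'M[R]_(d, n)) j x y :
  comp_form L j (x - y) = comp_form L j x - comp_form L j y.
Proof. by rewrite /comp_form mulmxBl !mxE. Qed.

Theorem mainTheorem6 (R : realType) (d m : nat) (phi : 'I_m -> config d -> bool) :
  (forall k, local (phi k)) ->
  (forall k, monotone (phi k)) ->
  (forall k, nonconstant (phi k)) ->
  forall (sigma : nat) (L : 'M[R]_(d, sigma)),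
    (2 <= sigma)%N -> linear_polar L ->
    (0 < \sum_(s < sigma)
           ereal_inf [set edge_speed (phi k) (comp_form L s) | k in [set: 'I_m]])%E ->
  exists (sigma' : nat) (L' : 'M[R]_(d, sigma')) (v : 'rV[R]_d),
    (2 <= sigma')%N /\ linear_polar L' /\
    forall (s : 'I_sigma') (k : 'I_m),
      (0 < comp_edge_speed (phi k) (comp_form L' s) v)%E.
Proof.
case: m phi => [|m] phi _ mon ncst sigma L _ L_pol speed_pos.
  exists 2%N, 0, 0; split => //; split; last by move=> s [].
  by move=> z; apply: big1 => s _; rewrite /comp_form mulmx0 mxE.
have [b [bE b_pos]] := esum_gt0_real_minorant speed_pos.
have [a [ab a_pos]] := sum_gt0_strict_minorant b_pos.
have witness k s : exists A, minimal_one_set (phi k) A /\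
    forall i, A i -> a s < comp_form L s (embed R i).
  apply: edge_speed_gt; apply: (@lt_le_trans _ _ (b s)%:E); first by rewrite lte_fin.
  by apply: le_trans (bE s) _; apply: ereal_inf_lbound; exists k.
have a_zero s : (forall i, L i s = 0) -> a s <= 0.
  move=> L_s; have [A [[_ [phiA _]] aA]] := witness ord0 s.
  have [i Ai] := one_set_nonempty (mon ord0) (ncst ord0) phiA.
  have := aA i Ai; rewrite /comp_form mxE big1 => [|j _].
    exact: ltW.
  by rewrite L_s mulr0.
have [n [L' [v [n_gt1 [L'_pol L'_a]]]]] := linear_polar_refinement L_pol a_pos a_zero.
exists n, L', v; split=> //; split=> // j k.
have [s [w [w_gt0 L'_L L'v]]] := L'_a j.
have [A [mA aA]] := witness k s.
apply: lt_le_trans (comp_edge_speed_ge (r := w * a s - comp_form L' j v) mA _).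
  by rewrite lte_fin subr_gt0.
by move=> i Ai; rewrite comp_formB lerD2r L'_L ler_pM2l // ltW // aA.
Qed.
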